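(* Let $\rho_n\rightarrow_C\rho_{n-1}\rightarrow_C\cdots\rightarrow_C\rho_1$ ($n\ge1$) be a trace of tidy formulas. Then there is a unique $\rho\in\{\rho_1,\dots,\rho_n\}$ such that $\rho\trianglelefteq_f\rho_i$ for all $i\in\{1,\dots,n\}$ (so that the given trace witnesses $\rho_n\twoheadrightarrow_C^{\rho}\rho_1$). Moreover, if $\rho_1$ is a fixpoint formula then so is $\rho$.
   Context: Syntax. Formulas of the modal $\mu$-calculus are taken in negation normal form: $\phi ::= \top \mid \bot \mid p \mid \neg p \mid x \mid \phi\land\phi\mid\phi\lor\phi\mid\Diamond\phi\mid\Box\phi\mid\mu x.\phi\mid\nu x.\phi$, where $p$ ranges over proposition letters and $x$ over an infinite supply of variables (which occur only positively). The formulas $\top,\bot,p,\neg p,x$ are atomic. $\mathrm{FV}(\phi)$ and $\mathrm{BV}(\phi)$ are the sets of free and bound variables of $\phi$; $\phi$ is tidy if $\mathrm{FV}(\phi)\cap\mathrm{BV}(\phi)=\varnothing$. A fixpoint formula is one of the form $\eta x.\chi$ with $\eta\in\{\mu,\nu\}$. $\chi[\xi/x]$ is the result of replacing every free occurrence of $x$ in $\chi$ by $\xi$; $\xi$ is free for $x$ in $\chi$ if no free variable of $\xi$ becomes bound in $\chi[\xi/x]$. Traces. The trace relation $\rightarrow_C$: $\phi_0\odot\phi_1\rightarrow_C\phi_i$ for $\odot\in\{\land,\lor\}$, $i\in\{0,1\}$; $\heartsuit\phi\rightarrow_C\phi$ for $\heartsuit\in\{\Diamond,\Box\}$; $\eta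 x.\phi\rightarrow_C\phi[\eta x.\phi/x]$; atomic formulas have no successors. A trace is a sequence of formulas with consecutive members related by $\rightarrow_C$. Free subformulas. $\phi\trianglelefteq_f\psi$ iff $\psi=\chi[\phi/y]$ for some formula $\chi$ and variable $y$ with $y\in\mathrm{FV}(\chi)$ and $\phi$ free for $y$ in $\chi$. For a formula $\psi$, $\rho\twoheadrightarrow_C^{\psi}\sigma$ iff there is a trace $\rho=\chi_0\rightarrow_C\cdots\rightarrow_C\chi_m=\sigma$ ($m\ge0$) with $\psi\trianglelefteq_f\chi_i$ for all $i\le m$. *)

From Stdlib Require Import List Arith PeanoNat.
Import ListNotations.

Inductive fp := Mu | Nu.

Inductive form : Type :=
| FTop | FBot
| FProp (p : nat) | FNProp (p : nat)
| FVar (x : nat)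
| FAnd (a b : form) | FOr (a b : form)
| FDia (a : form) | FBox (a : form)
| FFix (e : fp) (x : nat) (a : form).

Fixpoint fv (f : form) : list nat :=
  match f with
  | FVar x => [x]
  | FAnd a b | FOr a b => fv a ++ fv b
  | FDia a | FBox a => fv a
  | FFix _ x a => filter (fun y => negb (Nat.eqb y x)) (fv a)
  | _ => []
  end.

Fixpoint bv (f : form) : list nat :=
  match f with
  | FAnd a b | FOr a b => bv a ++ bv b
  | FDia a | FBox a => bv a
  | FFix _ x a => x :: bv a
  | _ => []
  end.

Definition tidy (f : form) : Prop :=
  forall x, In x (fv f) -> ~ In x (bv f).

Definition is_fixpoint (f : form) : Prop :=
  exists e x a, f = FFix e x a.

(* subst chi x xi = chi[xi/x]: replace every free occurrence of x in chi by xi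
   (plain, non-capture-avoiding replacement) *)
Fixpoint subst (chi : form) (x : nat) (xi : form) : form :=
  match chi with
  | FVar y => if Nat.eqb y x then xi else FVar y
  | FAnd a b => FAnd (subst a x xi) (subst b x xi)
  | FOr a b => FOr (subst a x xi) (subst b x xi)
  | FDia a => FDia (subst a x xi)
  | FBox a => FBox (subst a x xi)
  | FFix e y a => if Nat.eqb y x then FFix e y a else FFix e y (subst a x xi)
  | f => f
  end.

(* xi is free for x in chi: no free variable of xi becomes bound in chi[xi/x] *)
Fixpoint free_for (xi : form) (x : nat) (chi : form) : Prop :=
  match chi with
  | FAnd a b | FOr a b => free_for xi x a /\ free_for xi x b
  | FDia a | FBox a => free_for xi x a
  | FFix _ y a =>
      if Nat.eqb y x then True
      else (~ In x (fv a) \/ ~ In y (fv xi)) /\ free_for xi x a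
  | _ => True
  end.

Inductive step : form -> form -> Prop :=
| step_and_l a b : step (FAnd a b) a
| step_and_r a b : step (FAnd a b) b
| step_or_l a b : step (FOr a b) a
| step_or_r a b : step (FOr a b) b
| step_dia a : step (FDia a) a
| step_box a : step (FBox a) a
| step_fix e x a : step (FFix e x a) (subst a x (FFix e x a)).

Definition free_sub (phi psi : form) : Prop :=
  exists chi y, In y (fv chi) /\ free_for phi y chi /\ psi = subst chi y phi.

From Stdlib Require Import List Arith PeanoNat Lia.
Import ListNotations.

(* Free subformulas admit a syntactic description [fsub]: phi
   is reached from psi by descending into children, never passing a binder
   of a free variable of phi.  We show that [fsub] coincides with [free_sub]
   (choosing a fresh hole variable for the converse direction) and is a
   partial order (antisymmetric by a size argument, transitive because free
   variables of a free subformula stay free).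

   The heart of the argument is a dichotomy for one trace step A ->_C B with
   A tidy: every free subformula of B is either a free subformula of A, or
   A is a fixpoint formula and a free subformula of it.  For the unfolding
   step A = eta x.a -> a[A/x] this rests on a trichotomy for free subformulas
   of a substitution instance a[F/x] whose binders avoid the free variables
   of F.  Walking the trace from rho_1 up to rho_n, the dichotomy keeps a
   least element (w.r.t. [fsub]) among the formulas seen so far; it only
   changes to a newly met fixpoint formula, and antisymmetry gives uniqueness. *)

Inductive fsub (phi : form) : form -> Prop :=
| fs_refl : fsub phi phi
| fs_andl a b : fsub phi a -> fsub phi (FAnd a b)
| fs_andr a b : fsub phi b -> fsub phi (FAnd a b)
| fs_orl a b : fsub phi a -> fsub phi (FOr a b)
| fs_orr a b : fsub phi b -> fsub phi (FOr a b)
| fs_dia a : fsub phi a -> fsub phi (FDia a)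
| fs_box a : fsub phi a -> fsub phi (FBox a)
| fs_fix e x a : fsub phi a -> ~ In x (fv phi) -> fsub phi (FFix e x a).

Fixpoint fsize (f : form) : nat :=
  match f with
  | FAnd a b | FOr a b => S (fsize a + fsize b)
  | FDia a | FBox a | FFix _ _ a => S (fsize a)
  | _ => 1
  end.

Lemma fsub_size phi psi : fsub phi psi -> phi = psi \/ fsize phi < fsize psi.
Proof. induction 1; simpl; intuition (subst; lia). Qed.

Lemma fsub_antisym a b : fsub a b -> fsub b a -> a = b.
Proof.
  intros Hab Hba.
  destruct (fsub_size _ _ Hab), (fsub_size _ _ Hba); auto; lia.
Qed.

Lemma fsub_fv phi psi : fsub phi psi -> forall y, In y (fv phi) -> In y (fv psi).
Proof.
  induction 1; intros y Hy; simpl; auto using in_or_app.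
  apply filter_In; split; auto.
  destruct (Nat.eqb_spec y x); subst; [contradiction | reflexivity].
Qed.

Lemma fsub_trans a b c : fsub a b -> fsub b c -> fsub a c.
Proof.
  intros Hab Hbc; induction Hbc; try (constructor; auto; fail); auto.
  constructor; auto. intro Hx; apply H. eapply fsub_fv; eauto.
Qed.

Lemma in_fv_fix y x l :
  In y (filter (fun z => negb (z =? x)) l) <-> In y l /\ y <> x.
Proof.
  rewrite filter_In.
  destruct (Nat.eqb_spec y x); simpl; intuition discriminate.
Qed.

Lemma subst_notfree b y phi : ~ In y (fv b) -> subst b y phi = b.
Proof.
  induction b; simpl; intros H; auto;
    try (rewrite IHb1, IHb2; auto using in_or_app; fail);
    try (rewrite IHb; auto; fail).
  - destruct (Nat.eqb_spec x y); subst; tauto.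
  - destruct (Nat.eqb_spec x y); auto.
    rewrite IHb; auto. intro Hy; apply H, in_fv_fix; auto.
Qed.

Lemma free_for_notfree b y phi : ~ In y (fv b) -> free_for phi y b.
Proof.
  induction b; simpl; intros H; auto;
    try (split; [apply IHb1 | apply IHb2]; auto using in_or_app; fail).
  destruct (Nat.eqb_spec x y); auto.
  assert (~ In y (fv b)) by (intro Hy; apply H, in_fv_fix; auto).
  auto.
Qed.

Lemma subst_fsub phi chi y :
  In y (fv chi) -> free_for phi y chi -> fsub phi (subst chi y phi).
Proof.
  induction chi; simpl; intros Hin Hff; try contradiction;
    try (destruct Hff; apply in_app_or in Hin as [|];
         [apply fs_andl || apply fs_orl | apply fs_andr || apply fs_orr]; auto; fail);
    try (constructor; auto; fail).
  - destruct Hin as [<- | []]. rewrite Nat.eqb_refl. constructor.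
  - apply in_fv_fix in Hin as [Hin Hne].
    destruct (Nat.eqb_spec x y); [congruence |].
    destruct Hff as [[H | H] Hff]; [contradiction |].
    constructor; auto.
Qed.

Fixpoint allv (f : form) : list nat :=
  match f with
  | FVar x => [x]
  | FAnd a b | FOr a b => allv a ++ allv b
  | FDia a | FBox a => allv a
  | FFix _ x a => x :: allv a
  | _ => []
  end.

Lemma fv_allv f y : In y (fv f) -> In y (allv f).
Proof.
  induction f; simpl; intros H; auto;
    try (apply in_app_or in H as [|]; apply in_or_app; auto; fail).
  apply in_fv_fix in H as [H _]; auto.
Qed.

Lemma list_max_fresh l : ~ In (S (list_max l)) l.
Proof.
  intro Hin. assert (Hle : list_max l <= list_max l) by lia.
  apply list_max_le, Forall_forall with (x := S (list_max l)) in Hle; auto; lia.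
Qed.

Lemma sibling_inert phi y b :
  ~ In y (allv b) -> free_for phi y b /\ subst b y phi = b.
Proof.
  intro Hy; assert (~ In y (fv b)) by auto using fv_allv.
  auto using free_for_notfree, subst_notfree.
Qed.

Lemma fsub_context phi psi : fsub phi psi -> forall y, ~ In y (allv psi) ->
  exists chi, In y (fv chi) /\ free_for phi y chi /\ psi = subst chi y phi.
Proof.
  induction 1 as [ | a b _ IH | a b _ IH | a b _ IH | a b _ IH
                 | a _ IH | a _ IH | e x a _ IH Hx ]; intros y Hy; simpl in Hy;
    try (destruct (IH y) as (chi & Hin & Hff & ->); [intuition auto using in_or_app |]).
  - exists (FVar y); simpl; rewrite Nat.eqb_refl; auto.
  - destruct (sibling_inert phi y b) as [Hb Eb]; [intuition auto using in_or_app |].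
    exists (FAnd chi b); simpl; rewrite Eb; auto using in_or_app.
  - destruct (sibling_inert phi y a) as [Ha Ea]; [intuition auto using in_or_app |].
    exists (FAnd a chi); simpl; rewrite Ea; auto using in_or_app.
  - destruct (sibling_inert phi y b) as [Hb Eb]; [intuition auto using in_or_app |].
    exists (FOr chi b); simpl; rewrite Eb; auto using in_or_app.
  - destruct (sibling_inert phi y a) as [Ha Ea]; [intuition auto using in_or_app |].
    exists (FOr a chi); simpl; rewrite Ea; auto using in_or_app.
  - exists (FDia chi); auto.
  - exists (FBox chi); auto.
  - exists (FFix e x chi); simpl.
    destruct (Nat.eqb_spec x y); [intuition |].
    rewrite in_fv_fix; auto.
Qed.

Lemma free_sub_iff phi psi : free_sub phi psi <-> fsub phi psi.
Proof.
  split.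
  - intros (chi & y & Hin & Hff & ->); auto using subst_fsub.
  - intro H. set (y := S (list_max (allv psi))).
    destruct (fsub_context phi psi H y (list_max_fresh _)) as (chi & Hchi).
    exists chi, y; auto.
Qed.

(* The binders of a avoid the free variables of F: the side condition of unfolding
   that tidiness guarantees. *)
Definition binders_avoid (a F : form) : Prop :=
  forall y, In y (bv a) -> ~ In y (fv F).

Lemma free_for_binders_avoid a x F : binders_avoid a F -> free_for F x a.
Proof.
  unfold binders_avoid; induction a; simpl; intros Hd; auto;
    try (split; [apply IHa1 | apply IHa2]; intros; apply Hd, in_or_app; auto; fail).
  destruct (Nat.eqb_spec x0 x); [exact I |].
  split; [right; apply Hd; left |]; auto.
Qed.

Lemma instance_whole a x F rho : binders_avoid a F -> rho = subst a x F ->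
  fsub rho F \/ (fsub rho a /\ ~ In x (fv rho)) \/ fsub F rho.
Proof.
  intros Hd ->.
  destruct (in_dec Nat.eq_dec x (fv a)) as [Hx | Hx].
  - auto using subst_fsub, free_for_binders_avoid.
  - rewrite subst_notfree; auto using fs_refl.
Qed.

Lemma instance_subformula a x F rho : binders_avoid a F ->
  fsub rho (subst a x F) ->
  fsub rho F \/ (fsub rho a /\ ~ In x (fv rho)) \/ fsub F rho.
Proof.
  revert rho; induction a; intros rho Hd H; simpl in H;
    try (apply (instance_whole _ x F rho Hd); inversion H; reflexivity).
  - destruct (Nat.eqb_spec x0 x); [subst; auto |].
    inversion H; subst. right; left; split; [constructor | simpl; intuition].
  - inversion H; subst; [apply (instance_whole (FAnd a1 a2) x F _ Hd); auto | |].
    + destruct (IHa1 rho) as [| [[]|]]; auto using fs_andl.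
      intros y Hy; apply Hd, in_or_app; auto.
    + destruct (IHa2 rho) as [| [[]|]]; auto using fs_andr.
      intros y Hy; apply Hd, in_or_app; auto.
  - inversion H; subst; [apply (instance_whole (FOr a1 a2) x F _ Hd); auto | |].
    + destruct (IHa1 rho) as [| [[]|]]; auto using fs_orl.
      intros y Hy; apply Hd, in_or_app; auto.
    + destruct (IHa2 rho) as [| [[]|]]; auto using fs_orr.
      intros y Hy; apply Hd, in_or_app; auto.
  - inversion H; subst; [apply (instance_whole (FDia a) x F _ Hd); auto |].
    destruct (IHa rho) as [| [[]|]]; auto using fs_dia.
  - inversion H; subst; [apply (instance_whole (FBox a) x F _ Hd); auto |].
    destruct (IHa rho) as [| [[]|]]; auto using fs_box.
  - assert (Hd' : binders_avoid a F) by (intros y Hy; apply Hd; simpl; auto).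
    destruct (Nat.eqb_spec x0 x) as [<- | Hne]; inversion H; subst.
    + right; left; split; [constructor | simpl; rewrite in_fv_fix; intuition].
    + right; left; split; auto using fs_fix.
    + apply (instance_whole (FFix e x0 a) x F _ Hd); simpl.
      destruct (Nat.eqb_spec x0 x); congruence.
    + destruct (IHa rho) as [| [[]|]]; auto using fs_fix.
Qed.

Lemma step_subformula A B rho : step A B -> tidy A -> fsub rho B ->
  fsub rho A \/ (is_fixpoint A /\ fsub A rho).
Proof.
  intros Hs HA H; destruct Hs; auto using fsub, fs_andl, fs_andr, fs_orl, fs_orr.
  assert (Hd : binders_avoid a (FFix e x a))
    by (intros y Hy Hf; apply (HA y Hf); simpl; auto).
  destruct (instance_subformula a x (FFix e x a) rho Hd H) as [| [[]|]];
    auto using fs_fix.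
  right; split; auto. exists e, x, a; reflexivity.
Qed.

Lemma trace_least_formula (rho : nat -> form) n : 1 <= n ->
  (forall i, 1 <= i < n -> step (rho (S i)) (rho i)) ->
  (forall i, 1 <= i <= n -> tidy (rho i)) ->
  exists j, 1 <= j <= n /\ (forall i, 1 <= i <= n -> fsub (rho j) (rho i)) /\
    (is_fixpoint (rho 1) -> is_fixpoint (rho j)).
Proof.
  induction n as [| m IH]; intros Hn Hst Hti; [lia |].
  destruct (Nat.eq_dec m 0) as [-> | Hm].
  { exists 1; split; [lia | split; auto].
    intros i Hi; replace i with 1 by lia; constructor. }
  destruct IH as (j & Hj & Hall & Hfix);
    [lia | intros; apply Hst; lia | intros; apply Hti; lia |].
  destruct (step_subformula (rho (S m)) (rho m) (rho j)) as [Hkeep | [Hnew Hle]];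
    [apply Hst; lia | apply Hti; lia | apply Hall; lia | |].
  - exists j; split; [lia | split; auto].
    intros i Hi; destruct (Nat.eq_dec i (S m)) as [-> |]; auto.
    apply Hall; lia.
  - exists (S m); split; [lia | split; auto].
    intros i Hi; destruct (Nat.eq_dec i (S m)) as [-> |]; [constructor |].
    apply fsub_trans with (rho j); auto. apply Hall; lia.
Qed.

Theorem mainTheorem2 (n : nat) (rho : nat -> form) :
  1 <= n ->
  (forall i, 1 <= i < n -> step (rho (S i)) (rho i)) ->
  (forall i, 1 <= i <= n -> tidy (rho i)) ->
  (exists! r, (exists j, 1 <= j <= n /\ r = rho j) /\
              (forall i, 1 <= i <= n -> free_sub r (rho i))) /\
  (forall r, (exists j, 1 <= j <= n /\ r = rho j) ->
             (forall i, 1 <= i <= n -> free_sub r (rho i)) ->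
             is_fixpoint (rho 1) -> is_fixpoint r).
Proof.
  intros Hn Hst Hti.
  destruct (trace_least_formula rho n Hn Hst Hti) as (j & Hj & Hall & Hfix).
  (* any other candidate rho_j' is below and above rho_j, hence equal to it *)
  assert (Huniq : forall j', 1 <= j' <= n ->
            (forall i, 1 <= i <= n -> free_sub (rho j') (rho i)) -> rho j = rho j').
  { intros j' Hj' Hr; apply fsub_antisym; [apply Hall; auto |].
    apply free_sub_iff; auto. }
  split.
  - exists (rho j); split.
    + split; [exists j; auto |]. intros i Hi; apply free_sub_iff; auto.
    + intros r' [(j' & Hj' & ->) Hr]; auto.
  - intros r (j' & Hj' & ->) Hr Hf. rewrite <- (Huniq j'); auto.
Qed.
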